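(* Let $K_1$ and $K_2$ be oriented Legendrian knots of the same topological knot type with $tb(K_1)=tb(K_2)$ and $rot(K_1)=rot(K_2)$. Then for every finite permutation GL-rack $(X,\ast,u,d)$, $\operatorname{Col}_X(K_1)=\operatorname{Col}_X(K_2)$.
   Context: A rack is a set $X$ with a binary operation $\ast$ such that for every $y\in X$ the map $x\mapsto x\ast y$ is a bijection of $X$ and $(x\ast y)\ast z=(x\ast z)\ast(y\ast z)$ for all $x,y,z$. A GL-rack is a quadruple $(X,\ast,u,d)$ where $(X,\ast)$ is a rack and $u,d\colon X\to X$ are maps such that for all $x,y\in X$: $u(d(x\ast x))=d(u(x\ast x))=x$; $u(x\ast y)=u(x)\ast y$ and $d(x\ast y)=d(x)\ast y$; $x\ast u(y)=x\ast d(y)=x\ast y$. A permutation GL-rack is a GL-rack with $X$ finite and $x\ast y=\sigma(x)$ for all $x,y$, for a permutation $\sigma$ of $X$, with $u\circ d=\sigma^{-1}$. Legendrian knots lie in $(\mathbb{R}^3,\xi_{\mathrm{std}})$, $\xi_{\mathrm{std}}=\mathrm{span}\{\partial_y,\partial_x+y\partial_z\}$, and are represented by oriented front diagrams (projection to the $(x,z)$-plane). For a front diagram $D$ of $K$ with writhe $w(D)$, $u(D)$ cusps traversed upward and $d(D)$ cusps traversed downward, $tb(K)=w(D)-\frac12(u(D)+d(D))$ and $rot(K)=\frac12(d(D)-u(D))$. Given a finite GL-rack $X$, a coloring of $D$ is an assignment of elements of $X$ to the semi-arcs of $D$ (segments bounded by undercrossings or cusps) such that, following the orientation through a cusp, the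 color changes from $x$ to $u(x)$ if the cusp is traversed upward and to $d(x)$ if traversed downward; and at each crossing whose over-strand is colored $y$, if the under semi-arc on the right of the oriented over-strand is colored $x$, the one on its left is colored $x\ast y$. $\operatorname{Col}_X(K)$ is the number of colorings; it is a Legendrian isotopy invariant, equal to $|\operatorname{Hom}(\operatorname{GLR}(K),X)|$ for the fundamental GL-rack $\operatorname{GLR}(K)$. *)

From Stdlib Require Import Relations.
From HB Require Import structures.
From mathcomp Require Import all_boot all_order all_algebra all_fingroup.
Set Implicit Arguments. Unset Strict Implicit. Unset Printing Implicit Defensive.
Import Order.TTheory GRing.Theory Num.Theory.

Definition is_rack (X : Type) (op : X -> X -> X) : Prop :=
  (forall y, bijective (fun x => op x y)) /\
  (forall x y z, op (op x y) z = op (op x z) (op y z)).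

Definition is_GLrack (X : Type) (op : X -> X -> X) (u d : X -> X) : Prop :=
  [/\ is_rack op,
      (forall x, u (d (op x x)) = x /\ d (u (op x x)) = x),
      (forall x y, u (op x y) = op (u x) y /\ d (op x y) = op (d x) y) &
      (forall x y, op x (u y) = op x y /\ op x (d y) = op x y)].

Definition is_perm_GLrack (X : finType) (sigma : {perm X}) (u d : X -> X) : Prop :=
  is_GLrack (fun x _ => sigma x) u d /\ (forall x, u (d x) = (sigma^-1)%g x).

(* Front diagrams as words of elementary events, read left to right.   *)
(* Strands at a given x are numbered 0,1,.. from bottom (lowest z).    *)
(*  LC i : left cusp, new strands at positions i (lower), i+1 (upper); *)
(*         old strands p >= i move to p+2.                             *)
(*  RC i : right cusp joining strands i, i+1; old p >= i+2 move to p-2.*)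
(*  CR i : strands i and i+1 cross; in a front the strand of smaller   *)
(*         slope (the one going from i+1 down to i) is the over-strand.*)

Inductive FEv := LC of nat | RC of nat | CR of nat.

Definition st_step (n : nat) (e : FEv) : nat :=
  match e with LC _ => n.+2 | RC _ => n - 2 | CR _ => n end.

Definition st (w : seq FEv) (k : nat) : nat := foldl st_step 0 (take k w).

Definition ev (w : seq FEv) (k : nat) : FEv := nth (CR 0) w k.

Definition ev_ok (n : nat) (e : FEv) : bool :=
  match e with LC i => i <= n | RC i => i.+1 < n | CR i => i.+1 < n end.

Definition valid_word (w : seq FEv) : bool :=
  [&& 0 < size w, st w (size w) == 0 &
      all (fun k => ev_ok (st w k) (ev w k)) (iota 0 (size w))].

Definition pass (e : FEv) (p : nat) : option nat :=
  match e with
  | LC i => Some (if p < i then p else p.+2)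
  | RC i => if p < i then Some p else if p < i.+2 then None else Some (p - 2)
  | CR i => Some (if p == i then i.+1 else if p == i.+1 then i else p)
  end.

(* segments: strand p in the region between event k and event k+1 *)
Definition Seg (w : seq FEv) :=
  {kp : 'I_(size w).+1 * 'I_((size w).*2.+1) | kp.2 < st w kp.1}.

Section Front.
Variable w : seq FEv.

Definition sk (s : Seg w) : nat := (sval s).1.
Definition sp (s : Seg w) : nat := (sval s).2.

Definition cont (s t : Seg w) : bool :=
  (sk t == (sk s).+1) && (pass (ev w (sk s)) (sp s) == Some (sp t)).

(* s enters a crossing as the under-strand (going from i to i+1) *)
Definition is_under (s : Seg w) : bool :=
  if ev w (sk s) is CR i then sp s == i else false.

Definition lcusp (s t : Seg w) : bool :=
  [&& 0 < sk s, sk t == sk s, sp t == (sp s).+1 &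
      if ev w (sk s).-1 is LC i then sp s == i else false].

Definition rcusp (s t : Seg w) : bool :=
  [&& sk t == sk s, sp t == (sp s).+1 &
      if ev w (sk s) is RC i then sp s == i else false].

(* orientation: o s = true iff s is traversed left-to-right *)
Definition orient_ok (o : {ffun Seg w -> bool}) : bool :=
  [forall s, forall t,
     (cont s t ==> (o t == o s)) && ((lcusp s t || rcusp s t) ==> (o t != o s))].

Definition join (s t : Seg w) : bool := [|| cont s t, lcusp s t | rcusp s t].
Definition sjoin : rel (Seg w) := fun s t => join s t || join t s.

Definition connected : bool := [forall s, forall t, connect sjoin s t].

Section Oriented.
Variable o : {ffun Seg w -> bool}.

Definition lookdir (k p : nat) : bool :=
  [exists s : Seg w, [&& sk s == k, sp s == p & o s]].

Section Col.
Variables (X : finType) (op : X -> X -> X) (u d : X -> X).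

Definition coloringb (c : {ffun Seg w -> X}) : bool :=
  [&& [forall s, forall t, (cont s t && ~~ is_under s) ==> (c t == c s)],
      [forall s, forall s', forall t,
         [&& cont s t, is_under s, sk s' == sk s & sp s' == (sp s).+1] ==>
         (* s' is the incoming over-strand, colored y = c s';
            left of oriented over-strand gets x * y *)
         (if o s' then c t == op (c s) (c s') else c s == op (c t) (c s'))],
      [forall s, forall t, lcusp s t ==>
         (if o s then c s == d (c t) (* traversed downward *)
          else c t == u (c s) (* traversed upward *))] &
      [forall s, forall t, rcusp s t ==>
         (if o s then c t == u (c s) (* upward *)
          else c s == d (c t) (* downward *))]].

Definition ColD : nat := #|[pred c : {ffun Seg w -> X} | coloringb c]|.
End Col.

(* writhe: a front crossing is positive iff both strands point the same
   horizontal direction *)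
Definition writhe : int :=
  (\sum_(s : Seg w | is_under s)
     (if o s == lookdir (sk s) (sp s).+1 then 1 else -1))%R.

Definition up_cusps : nat :=
  #|[pred s | [exists t, lcusp s t] && ~~ o s]| +
  #|[pred s | [exists t, rcusp s t] && o s]|.
Definition down_cusps : nat :=
  #|[pred s | [exists t, lcusp s t] && o s]| +
  #|[pred s | [exists t, rcusp s t] && ~~ o s]|.

Definition tbD : rat := (writhe%:~R - (up_cusps + down_cusps)%:R / 2)%R.
Definition rotD : rat := (((down_cusps : int) - (up_cusps : int))%:~R / 2)%R.

(* Polygonal lift to R^3 (y = dz/dx of the PL front, connected by      *)
(* segments parallel to the y-axis), oriented.                         *)
Definition pt3 := 'rV[rat]_3.
Definition P3 (x y z : rat) : pt3 := (\row_(j < 3) nth 0 [:: x; y; z] j)%R.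
Definition Nq (n : nat) : rat := n%:R.
Definition orientE (b : bool) (e : pt3 * pt3) := if b then e else (e.2, e.1).

Definition horiz (k : nat) : seq (pt3 * pt3) :=
  [seq orientE (lookdir k p) (P3 (Nq k.*2) 0 (Nq p), P3 (Nq k.*2.+1) 0 (Nq p))
  | p <- iota 0 (st w k)].

Definition strandE (x0 : rat) (p q : nat) (b : bool) : seq (pt3 * pt3) :=
  let s := (Nq q - Nq p)%R in
  [seq orientE b e | e <- [:: (P3 x0 0 (Nq p), P3 x0 s (Nq p));
                             (P3 x0 s (Nq p), P3 (x0 + 1) s (Nq q));
                             (P3 (x0 + 1) s (Nq q), P3 (x0 + 1) 0 (Nq q))]
                   & e.1 != e.2].

Definition slab (k : nat) : seq (pt3 * pt3) :=
  let x0 := Nq k.*2.+1 in let x1 := (x0 + 1)%R in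
  flatten [seq (if pass (ev w k) p is Some q then strandE x0 p q (lookdir k p)
                else [::]) | p <- iota 0 (st w k)] ++
  match ev w k with
  | LC i => let c := (Nq i - 1/2)%R in
     [seq orientE (lookdir k.+1 i) e
     | e <- [:: (P3 x0 (1/2) c, P3 x1 (1/2) (Nq i));
                (P3 x1 (1/2) (Nq i), P3 x1 0 (Nq i));
                (P3 x0 (3/2) c, P3 x0 (1/2) c)]] ++
     [seq orientE (lookdir k.+1 i.+1) e
     | e <- [:: (P3 x0 (3/2) c, P3 x1 (3/2) (Nq i.+1));
                (P3 x1 (3/2) (Nq i.+1), P3 x1 0 (Nq i.+1))]]
  | RC i => let c := (Nq i - 1/2)%R in
     [seq orientE (lookdir k i) e
     | e <- [:: (P3 x0 0 (Nq i), P3 x0 (-(1/2)) (Nq i));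
                (P3 x0 (-(1/2)) (Nq i), P3 x1 (-(1/2)) c);
                (P3 x1 (-(1/2)) c, P3 x1 (-(3/2)) c)]] ++
     [seq orientE (lookdir k i.+1) e
     | e <- [:: (P3 x0 0 (Nq i.+1), P3 x0 (-(3/2)) (Nq i.+1));
                (P3 x0 (-(3/2)) (Nq i.+1), P3 x1 (-(3/2)) c)]]
  | CR _ => [::]
  end.

Definition lift : seq (pt3 * pt3) :=
  flatten [seq horiz k | k <- iota 0 (size w).+1] ++
  flatten [seq slab k | k <- iota 0 (size w)].

End Oriented.
End Front.

Record LegKnot := {
  lk_w : seq FEv;
  lk_o : {ffun Seg lk_w -> bool};
  lk_valid : valid_word lk_w;
  lk_orient : orient_ok lk_o;
  lk_conn : connected lk_w }.

Definition tb_of (K : LegKnot) : rat := tbD (lk_o K).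
Definition rot_of (K : LegKnot) : rat := rotD (lk_o K).
Definition Col (X : finType) (op : X -> X -> X) (u d : X -> X) (K : LegKnot) : nat :=
  ColD (lk_o K) op u d.

(* Topological knot type: oriented polygonal knots (lists of directed  *)
(* edges) up to Delta-moves (Reidemeister/Alexander-Briggs).           *)
Definition in_seg (a b p : pt3) : Prop :=
  exists t : rat, [/\ (0 <= t)%R, (t <= 1)%R & p = ((1 - t) *: a + t *: b)%R].

Definition in_tri (a b c p : pt3) : Prop :=
  exists s t : rat, [/\ (0 <= s)%R, (0 <= t)%R, (s + t <= 1)%R &
                      p = (a + s *: (b - a) + t *: (c - a))%R].

Definition on_pl (K : seq (pt3 * pt3)) (p : pt3) : Prop :=
  exists2 e, e \in K & in_seg e.1 e.2 p.

Definition tri_move (K K' : seq (pt3 * pt3)) : Prop :=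
  exists a b c rest,
    [/\ perm_eq K ((a, b) :: rest),
        perm_eq K' ((a, c) :: (c, b) :: rest),
        \rank (col_mx (b - a)%R (c - a)%R) = 2 &
        forall p, in_tri a b c p -> on_pl K p -> in_seg a b p].

Definition PL_step (K K' : seq (pt3 * pt3)) : Prop := perm_eq K K' \/ tri_move K K'.
Definition PL_equiv := clos_refl_sym_trans _ PL_step.

Definition same_knot_type (K1 K2 : LegKnot) : Prop :=
  PL_equiv (lift (lk_o K1)) (lift (lk_o K2)).

(* Following its orientation, a connected front is a single cycle of segments
   (the map [next]).  A coloring by a permutation GL-rack is therefore
   determined by the color of one segment, the color changing along the cycle
   by [sigma] or [sigma^-1] at undercrossings (according to the sign of the
   crossing), by [u] at upward and by [d] at downward cusps.  The GL-rack axioms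
   make [u] a permutation commuting with [sigma] and force [d = sigma^-1 u^-1],
   so the colorings correspond to the fixed points of the monodromy
   [sigma^(w - D) u^(U - D)], where [w] is the writhe and [U], [D] count the up
   and down cusps.  As [w - D = tb - rot] and [U - D = -2 rot], this number only
   depends on [tb] and [rot]. *)

From HB Require Import structures.
From mathcomp Require Import all_boot all_order all_algebra all_fingroup.
From mathcomp Require Import zify ring.
Set Implicit Arguments. Unset Strict Implicit. Unset Printing Implicit Defensive.
Import GRing.Theory.

(** * Labellings along a cycle *)

Section CycleLabellings.
Local Open Scope ring_scope.
Variables (V X : finType) (M : nmodType) (F : M -> X -> X).
Hypotheses (F0 : forall x, F 0 x = x) (FD : forall m n x, F (m + n) x = F m (F n x)).
Variables (f : V -> V) (a : V -> M) (s0 : V).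
Hypotheses (f_inj : injective f) (f_cycle : forall t, fconnect f s0 t).

Let N := fingraph.order f s0.
Let A k := \sum_(i < k) a (iter i f s0).

Lemma sum_orbit : A N = \sum_s a s.
Proof.
have traject_sum n x : \sum_(i < n) a (iter i f x) = \sum_(t <- traject f x n) a t.
  elim: n x => [|n IHn] x; first by rewrite big_ord0 big_nil.
  by rewrite big_ord_recl big_cons -IHn; under [in RHS]eq_bigr do rewrite -iterSr.
rewrite /A traject_sum -big_enum; apply/perm_big/uniq_perm; rewrite ?orbit_uniq ?enum_uniq // => t.
by rewrite mem_enum -fconnect_orbit f_cycle.
Qed.

Lemma labelling_iter (c : V -> X) : (forall s, c (f s) = F (a s) (c s)) ->
  forall k, c (iter k f s0) = F (A k) (c s0).
Proof.
move=> c_lab; elim=> [|k IHk]; first by rewrite /A big_ord0 F0.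
by rewrite /A big_ord_recr /= c_lab IHk -FD addrC.
Qed.

Lemma labelling_of_fixed x : F (\sum_s a s) x = x ->
  forall s, F (A (findex f s0 (f s))) x = F (a s) (F (A (findex f s0 s)) x).
Proof.
move=> x_fixed s; have := iter_findex (f_cycle s); have := findex_max (f_cycle s).
set i := findex f s0 s => i_lt s_def; rewrite -FD.
have [i1_lt|] := ltnP i.+1 N.
  have -> : findex f s0 (f s) = i.+1 by rewrite -s_def -iterS findex_iter.
  by rewrite /A big_ord_recr /= s_def addrC.
rewrite -/N => N_le; have i1N : i.+1 = N by apply/eqP; rewrite eqn_leq i_lt.
have -> : f s = s0 by rewrite -s_def -iterS i1N iter_order.
by rewrite findex0 {1}/A big_ord0 F0 -{1}x_fixed -sum_orbit -i1N /A big_ord_recr /= s_def addrC.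
Qed.

Lemma card_cycle_labellings :
  #|[pred c : {ffun V -> X} | [forall s, c (f s) == F (a s) (c s)]]| =
  #|[pred x | F (\sum_s a s) x == x]|.
Proof.
set L := [pred c : {ffun V -> X} | _].
have labP c : c \in L -> forall s, c (f s) = F (a s) (c s) by move/forallP=> c_lab s; apply/eqP.
rewrite -(@card_in_imset _ _ (fun c : {ffun V -> X} => c s0) L); last first.
  move=> c1 c2 /labP c1_lab /labP c2_lab /= c12; apply/ffunP => t.
  by rewrite -(iter_findex (f_cycle t)) !labelling_iter // c12.
apply: eq_card => x; rewrite inE /=; apply/imsetP/eqP => [[c /labP c_lab ->]|x_fixed].
  by rewrite -sum_orbit -labelling_iter // iter_order.
exists [ffun t => F (A (findex f s0 t)) x]; last by rewrite ffunE findex0 /A big_ord0 F0.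
by rewrite inE; apply/forallP => s; rewrite !ffunE labelling_of_fixed.
Qed.

End CycleLabellings.

(* [#[g].-1] stands for [-1]: this is [g^(a - b) = g^(a' - b')]. *)
Lemma expg_pred_order_eq (gT : finGroupType) (g : gT) a b a' b' :
  a + b' = a' + b -> (g ^+ (a + #[g].-1 * b) = g ^+ (a' + #[g].-1 * b'))%g.
Proof.
move=> ab; rewrite !expgD !expgM -invg_expg !expVgn.
apply: (@mulIg _ (g ^+ b * g ^+ b')%g).
rewrite mulgA mulgKV -expgD ab expgD [in RHS](commuteX2 _ _ (commute_refl g)).
by rewrite [in RHS]mulgA mulgKV.
Qed.

Lemma card_predIf (T : finType) (b P Q : pred T) :
  #|[pred x | if b x then P x else Q x]| = #|[pred x | P x && b x]| + #|[pred x | Q x && ~~ b x]|.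
Proof.
rewrite -(cardID b); congr (_ + _); apply: eq_card => x;
by rewrite !inE unfold_in; case: (b x); rewrite ?andbT ?andbF.
Qed.

Lemma pass_inj e p p' q : pass e p = Some q -> pass e p' = Some q -> p = p'.
Proof.
case: e => i /=; do ! case: ifP => /= ?; move=> h1 h2; (try discriminate);
move: h1 h2 => /(congr1 (odflt 0)) /= h1 /(congr1 (odflt 0)) /= h2; lia.
Qed.

Lemma pass_lt n e p q : ev_ok n e -> p < n -> pass e p = Some q -> q < st_step n e.
Proof.
by case: e => i /=; do ! case: ifP => /= ?; move=> ok lt; try discriminate; case=> <-; lia.
Qed.

Lemma pass_None e p : pass e p = None -> exists2 i, e = RC i & p = i \/ p = i.+1.
Proof. by case: e => //= i; do 2 case: ifP => // ?; exists i => //; lia. Qed.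

Lemma pass_CR_sym i p q : pass (CR i) p = Some q -> pass (CR i) q = Some p.
Proof.
move=> /= [<-]; case: (eqVneq p i) => [->|pi]; last case: (eqVneq p i.+1) => [->|pi1].
all: by do 2 rewrite ?eqxx ?(gtn_eqF (ltnSn _)) ?(negPf pi) ?(negPf pi1) /=.
Qed.

Lemma pass_onto n e q : ev_ok n e -> q < st_step n e ->
  (exists2 p, p < n & pass e p = Some q) \/ (exists2 i, e = LC i & q = i \/ q = i.+1).
Proof.
case: e => i /= ok q_lt.
- have [q_i|i_le_q] := ltnP q i; first by left; exists q; rewrite ?q_i //; lia.
  have [q_i2|i2_le_q] := ltnP q i.+2; first by right; exists i => //; lia.
  by left; exists (q - 2); [lia | rewrite ifN; [congr Some|]; lia].
- have [q_i|i_le_q] := ltnP q i; first by left; exists q; rewrite ?q_i //; lia.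
  left; exists q.+2; first lia.
  by rewrite ifN ?ifN ?subSS ?subn0 //; lia.
- left; exists (if q == i then i.+1 else if q == i.+1 then i else q); last exact: pass_CR_sym.
  exact: (@pass_lt n (CR i) q).
Qed.

Inductive kind := KId | KSig | KSigInv | KU | KD.

Definition kind_comparable : comparable kind.
Proof. by rewrite /comparable /decidable; decide equality. Defined.

HB.instance Definition _ := comparableMixin kind_comparable.

Definition kcross (positive : bool) : kind := if positive then KSig else KSigInv.

Section Front.
Variable w : seq FEv.
Hypothesis w_valid : valid_word w.

Lemma stS k : k < size w -> st w k.+1 = st_step (st w k) (ev w k).
Proof. by move=> lt_k; rewrite /st (take_nth (CR 0)) // foldl_rcons. Qed.

Lemma ev_ok_st k : k < size w -> ev_ok (st w k) (ev w k).
Proof. by move=> lt_k; case/and3P: w_valid => _ _ /allP; apply; rewrite mem_iota. Qed.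

Lemma st_oversize k : size w <= k -> st w k = 0.
Proof. by move=> le_k; case/and3P: w_valid => _ /eqP; rewrite /st take_size take_oversize. Qed.

Lemma st0 : st w 0 = 0.
Proof. by rewrite /st take0. Qed.

Lemma st_le_double k : st w k <= k.*2.
Proof.
elim: k => [|k IHk]; first by rewrite st0.
have [lt_k|le_k] := ltnP k (size w); last by rewrite st_oversize // leqW.
by rewrite stS //; case: (ev w k) => i /=; lia.
Qed.

Lemma sp_lt (s : Seg w) : sp s < st w (sk s).
Proof. exact: (valP s). Qed.

Lemma sk_lt (s : Seg w) : sk s < size w.
Proof.
have := sp_lt s; have [//|le_k] := ltnP (sk s) (size w).
by rewrite st_oversize.
Qed.

Lemma exists_seg k p : k <= size w -> p < st w k -> exists t : Seg w, sk t = k /\ sp t = p.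
Proof.
move=> le_k lt_p; have lt_p2 : p < (size w).*2.+1 by have := st_le_double k; lia.
by exists (@Sub _ _ (Seg w) (Ordinal (le_k : k < (size w).+1), Ordinal lt_p2) lt_p).
Qed.

Lemma eq_seg (s t : Seg w) : sk s = sk t -> sp s = sp t -> s = t.
Proof.
case: s t => [[k p] ?] [[k' p'] ?]; rewrite /sk /sp /= => eq_k eq_p.
by apply: val_inj; congr pair; apply: val_inj.
Qed.

Lemma seg_inhabited : exists s : Seg w, true.
Proof.
case/and3P: w_valid => size_gt0 _ _; have := ev_ok_st size_gt0; have := stS size_gt0.
rewrite st0; case: (ev w 0) => // i /= st1 _.
have [s _] := @exists_seg 1 0 size_gt0 ltac:(by rewrite st1).
by exists s.
Qed.

Lemma cont_sk (s t : Seg w) : cont s t -> sk t = (sk s).+1.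
Proof. by case/andP => /eqP. Qed.

Lemma cont_pass (s t : Seg w) : cont s t -> pass (ev w (sk s)) (sp s) = Some (sp t).
Proof. by case/andP => _ /eqP. Qed.

Lemma lcusp_sk (s t : Seg w) : lcusp s t -> sk t = sk s.
Proof. by case/and4P => _ /eqP. Qed.

Lemma lcusp_contF (s t : Seg w) : lcusp s t -> cont s t = false /\ cont t s = false.
Proof.
by move=> st; split; apply/negP => /cont_sk; rewrite (lcusp_sk st); lia.
Qed.

Lemma rcusp_pass_lower (s t : Seg w) : rcusp s t -> pass (ev w (sk s)) (sp s) = None.
Proof.
by case/and3P => _ _; case: (ev w (sk s)) => //= i /eqP->; rewrite ltnn ltnS leqnSn.
Qed.

Lemma rcusp_pass_upper (s t : Seg w) : rcusp s t -> pass (ev w (sk t)) (sp t) = None.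
Proof.
case/and3P => /eqP-> /eqP->; case: (ev w (sk s)) => //= i /eqP->.
by rewrite ltnNge leqnSn ltnSn.
Qed.

Lemma lcusp_no_pass_lower (s t : Seg w) p : lcusp s t -> pass (ev w (sk s).-1) p != Some (sp s).
Proof.
case/and4P => _ _ _; case: (ev w _) => //= i /eqP->.
by case: ifP => ? //; apply/eqP => -[]; lia.
Qed.

Lemma lcusp_no_pass_upper (s t : Seg w) p : lcusp s t -> pass (ev w (sk t).-1) p != Some (sp t).
Proof.
case/and4P => _ /eqP-> /eqP->; case: (ev w _) => //= i /eqP->.
by case: ifP => ? //; apply/eqP => -[]; lia.
Qed.

Lemma exists_cont_or_rcusp (s : Seg w) : (exists t, cont s t) \/ (exists t, rcusp s t || rcusp t s).
Proof.
have lt_k := sk_lt s; have ok := ev_ok_st lt_k.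
case E: (pass (ev w (sk s)) (sp s)) => [q|].
  have lt_q : q < st w (sk s).+1 by rewrite stS //; apply: pass_lt E; last exact: sp_lt.
  have [t [kt pt]] := exists_seg lt_k lt_q.
  by left; exists t; rewrite /cont kt pt E !eqxx.
have [i Ei [sp_i|sp_i1]] := pass_None E; rewrite Ei /= in ok; right.
  have [t [kt pt]] := @exists_seg (sk s) i.+1 (ltnW lt_k) ok.
  by exists t; rewrite /rcusp kt pt Ei sp_i !eqxx.
have [t [kt pt]] := @exists_seg (sk s) i (ltnW lt_k) (ltnW ok).
by exists t; rewrite /rcusp kt pt Ei sp_i1 !eqxx orbT.
Qed.

Lemma exists_pre_cont_or_lcusp (t : Seg w) :
  (exists s, cont s t) \/ (exists s, lcusp t s || lcusp s t).
Proof.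
have lt_p := sp_lt t; have lt_k := sk_lt t.
case E: (sk t) lt_p lt_k => [|j]; first by rewrite st0.
move=> lt_p /ltnW lt_j; have le_j := ltnW lt_j; have ok := ev_ok_st lt_j.
rewrite stS // in lt_p; have [[p lt_p' Ep]|[i Ei [tp|tp]]] := pass_onto ok lt_p.
- have [s [ks ps]] := exists_seg le_j lt_p'.
  by left; exists s; rewrite /cont E ks ps Ep !eqxx.
- rewrite Ei /= in ok.
  have [s [ks ps]] := @exists_seg j.+1 i.+1 lt_j ltac:(rewrite stS // Ei /=; lia).
  by right; exists s; rewrite /lcusp E ks ps Ei tp !eqxx.
- rewrite Ei /= in ok.
  have [s [ks ps]] := @exists_seg j.+1 i lt_j ltac:(rewrite stS // Ei /=; lia).
  by right; exists s; rewrite /lcusp E ks ps Ei tp !eqxx orbT.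
Qed.

Lemma cont_fun (s t t' : Seg w) : cont s t -> cont s t' -> t = t'.
Proof.
move=> st st'; apply: eq_seg; first by rewrite (cont_sk st) (cont_sk st').
by move: (cont_pass st); rewrite (cont_pass st') => -[].
Qed.

Lemma cont_inj (s s' t : Seg w) : cont s t -> cont s' t -> s = s'.
Proof.
move=> st s't; have eq_k : sk s = sk s' by apply: succn_inj; rewrite -(cont_sk st) -(cont_sk s't).
by apply: eq_seg => //; apply: (pass_inj (cont_pass st)); rewrite eq_k (cont_pass s't).
Qed.

Lemma rcusp_fun (s t t' : Seg w) : rcusp s t -> rcusp s t' -> t = t'.
Proof. by move=> /and3P[/eqP ? /eqP ? _] /and3P[/eqP ? /eqP ? _]; apply: eq_seg; congruence. Qed.

Lemma rcusp_inj (s s' t : Seg w) : rcusp s t -> rcusp s' t -> s = s'.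
Proof. by move=> /and3P[/eqP ? /eqP ? _] /and3P[/eqP ? /eqP ? _]; apply: eq_seg; congruence. Qed.

Lemma lcusp_fun (s t t' : Seg w) : lcusp s t -> lcusp s t' -> t = t'.
Proof.
by move=> /and4P[_ /eqP ? /eqP ? _] /and4P[_ /eqP ? /eqP ? _]; apply: eq_seg; congruence.
Qed.

Lemma lcusp_inj (s s' t : Seg w) : lcusp s t -> lcusp s' t -> s = s'.
Proof.
by move=> /and4P[_ /eqP ? /eqP ? _] /and4P[_ /eqP ? /eqP ? _]; apply: eq_seg; congruence.
Qed.

Lemma cont_rcusp_lower (s t t' : Seg w) : cont s t -> rcusp s t' -> False.
Proof. by move=> /cont_pass + /rcusp_pass_lower => ->. Qed.

Lemma cont_rcusp_upper (s t t' : Seg w) : cont s t -> rcusp t' s -> False.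
Proof. by move=> /cont_pass + /rcusp_pass_upper => ->. Qed.

Lemma cont_lcusp_lower (s t t' : Seg w) : cont s t -> lcusp t t' -> False.
Proof.
move=> st /(lcusp_no_pass_lower (sp s)).
by rewrite (cont_sk st) (cont_pass st) eqxx.
Qed.

Lemma cont_lcusp_upper (s t t' : Seg w) : cont s t -> lcusp t' t -> False.
Proof.
move=> st /(lcusp_no_pass_upper (sp s)).
by rewrite (cont_sk st) (cont_pass st) eqxx.
Qed.

Lemma rcusp_lower_upper (s t t' : Seg w) : rcusp s t -> rcusp t' s -> False.
Proof.
move=> /and3P[_ _ ev_s] /and3P[/eqP k /eqP p]; rewrite k in ev_s.
by case: (ev w _) ev_s => // i /eqP + /eqP; lia.
Qed.

Lemma lcusp_lower_upper (s t t' : Seg w) : lcusp s t -> lcusp t' s -> False.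
Proof.
move=> /and4P[_ _ _ ev_s] /and4P[_ /eqP k /eqP p]; rewrite k in ev_s.
by case: (ev w _) ev_s => // i /eqP + /eqP; lia.
Qed.

(** * The cycle of oriented segments *)

Variable o : {ffun Seg w -> bool}.
Hypothesis o_ok : orient_ok o.

Lemma orient_cont (s t : Seg w) : cont s t -> o t = o s.
Proof. by move=> st; move/forallP/(_ s)/forallP/(_ t): o_ok; rewrite st => /andP[/eqP]. Qed.

Lemma orient_lcusp (s t : Seg w) : lcusp s t -> o t = ~~ o s.
Proof.
move=> st; move/forallP/(_ s)/forallP/(_ t): o_ok; rewrite st /= => /andP[_].
by case: (o s); case: (o t).
Qed.

Lemma orient_rcusp (s t : Seg w) : rcusp s t -> o t = ~~ o s.
Proof.
move=> st; move/forallP/(_ s)/forallP/(_ t): o_ok; rewrite st orbT /= => /andP[_].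
by case: (o s); case: (o t).
Qed.

Definition step (s t : Seg w) : bool :=
  if o s then [|| cont s t, rcusp s t | rcusp t s]
  else [|| cont t s, lcusp s t | lcusp t s].

Definition next (s : Seg w) : Seg w := odflt s [pick t | step s t].

Lemma exists_step (s : Seg w) : exists t, step s t.
Proof.
rewrite /step; case: (o s).
  by case: (exists_cont_or_rcusp s) => -[t st]; exists t; rewrite st ?orbT.
by case: (exists_pre_cont_or_lcusp s) => -[t st]; exists t; rewrite st ?orbT.
Qed.

Lemma step_fun (s t t' : Seg w) : step s t -> step s t' -> t = t'.
Proof.
rewrite /step; case: (o s) => /or3P[h|h|h] /or3P[h'|h'|h'].
all: first [ exact: cont_fun h h' | exact: cont_inj h h' | exact: rcusp_fun h h'
           | exact: rcusp_inj h h' | exact: lcusp_fun h h' | exact: lcusp_inj h h' | exfalso ].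
all: first [ exact: cont_rcusp_lower h h' | exact: cont_rcusp_lower h' h
           | exact: cont_rcusp_upper h h' | exact: cont_rcusp_upper h' h
           | exact: rcusp_lower_upper h h' | exact: rcusp_lower_upper h' h
           | exact: cont_lcusp_lower h h' | exact: cont_lcusp_lower h' h
           | exact: cont_lcusp_upper h h' | exact: cont_lcusp_upper h' h
           | exact: lcusp_lower_upper h h' | exact: lcusp_lower_upper h' h ].
Qed.

Lemma next_step (s : Seg w) : step s (next s).
Proof.
rewrite /next; case: pickP => [t //|no_step].
by have [t] := exists_step s; rewrite no_step.
Qed.

Lemma next_eq (s t : Seg w) : step s t -> next s = t.
Proof. exact: step_fun (next_step s). Qed.

Lemma exists_step_pre (t : Seg w) : exists s, step s t.
Proof.
rewrite /step; case ot: (o t).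
  case: (exists_pre_cont_or_lcusp t) => -[s h]; exists s.
    by rewrite -(orient_cont h) ot h.
  case/orP: h => h; [have := orient_lcusp h | have := esym (orient_lcusp h)];
  by rewrite ot; case: (o s) => // _; rewrite h !orbT.
case: (exists_cont_or_rcusp t) => -[s h]; exists s.
  by rewrite (orient_cont h) ot h.
case/orP: h => h; [have := orient_rcusp h | have := esym (orient_rcusp h)];
by rewrite ot; case: (o s) => // _; rewrite h !orbT.
Qed.

Lemma next_inj : injective next.
Proof.
pose prev t := odflt t [pick s | next s == t].
have prevK : cancel prev next.
  move=> t; rewrite /prev; case: pickP => [s /eqP //|no_pre].
  by have [s /next_eq next_s] := exists_step_pre t; move: (no_pre s); rewrite next_s eqxx.
have [g prev_g g_prev] := injF_bij (can_inj prevK).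
have next_g : next =1 g by move=> s; rewrite -{1}(g_prev s) prevK.
by move=> s s'; rewrite !next_g; exact: (can_inj g_prev).
Qed.

Lemma next_cont (s t : Seg w) : cont s t -> if o s then next s = t else next t = s.
Proof.
by move=> st; case os: (o s); apply: next_eq; rewrite /step ?(orient_cont st) os st ?orbT.
Qed.

Lemma next_rcusp (s t : Seg w) : rcusp s t -> if o s then next s = t else next t = s.
Proof.
by move=> st; case os: (o s); apply: next_eq; rewrite /step ?(orient_rcusp st) os st ?orbT.
Qed.

Lemma next_lcusp (s t : Seg w) : lcusp s t -> if o s then next t = s else next s = t.
Proof.
by move=> st; case os: (o s); apply: next_eq; rewrite /step ?(orient_lcusp st) os st ?orbT.
Qed.

Lemma sjoin_next (s t : Seg w) : sjoin s t -> next s = t \/ next t = s.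
Proof.
rewrite /sjoin /join => /orP[] /or3P[st|st|st].
- by have := next_cont st; case: (o s); [left|right].
- by have := next_lcusp st; case: (o s); [right|left].
- by have := next_rcusp st; case: (o s); [left|right].
- by have := next_cont st; case: (o t); [right|left].
- by have := next_lcusp st; case: (o t); [left|right].
- by have := next_rcusp st; case: (o t); [right|left].
Qed.

Lemma fconnect_next : connected w -> forall s t, fconnect next s t.
Proof.
move=> /forallP w_conn s t; move/forallP/(_ t): (w_conn s).
apply: connect_sub => x y /sjoin_next [<-|<-]; first exact: fconnect1.
by rewrite (fconnect_sym next_inj) fconnect1.
Qed.

Lemma under_over (s : Seg w) : is_under s -> exists s' : Seg w, sk s' = sk s /\ sp s' = (sp s).+1.
Proof.
rewrite /is_under; have lt_k := sk_lt s; have := ev_ok_st lt_k.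
by case: (ev w (sk s)) => // i /= ok /eqP sp_i; apply: exists_seg; rewrite ?sp_i // ltnW.
Qed.

Lemma under_cont (s : Seg w) : is_under s -> exists t, cont s t.
Proof.
move=> s_under; have : pass (ev w (sk s)) (sp s) != None.
  by move: s_under; rewrite /is_under; case: (ev w _).
by case: (exists_cont_or_rcusp s) => // -[t /orP[/rcusp_pass_lower|/rcusp_pass_upper] ->].
Qed.

Definition over_dir (s : Seg w) : bool := lookdir o (sk s) (sp s).+1.

Lemma over_dirE (s s' : Seg w) : sk s' = sk s -> sp s' = (sp s).+1 -> over_dir s = o s'.
Proof.
rewrite /over_dir => <- <-; apply/existsP/idP => [[s'' /and3P[/eqP k /eqP p]]|os'].
  by rewrite (eq_seg k p).
by exists s'; rewrite !eqxx.
Qed.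

(* The change of color from [s] to [next s], read off the event at the right
   end of [s] if [s] runs rightward and at its left end otherwise. *)
Definition kind_of (s : Seg w) : kind :=
  let t := next s in
  if o s then
    if cont s t then (if is_under s then kcross (o s == over_dir s) else KId)
    else if rcusp s t then KU else KD
  else
    if cont t s then (if is_under t then kcross (o t == over_dir t) else KId)
    else if lcusp s t then KU else KD.

Lemma kind_cont (s t : Seg w) : cont s t ->
  kind_of (if o s then s else t) = if is_under s then kcross (o s == over_dir s) else KId.
Proof.
move=> st; have := next_cont st; have ot := orient_cont st; rewrite /kind_of.
by case os: (o s) => ->; rewrite ?ot ?os st.
Qed.

Lemma kind_rcusp (s t : Seg w) : rcusp s t -> if o s then kind_of s = KU else kind_of t = KD.
Proof.
move=> st; have := next_rcusp st; have ot := orient_rcusp st; rewrite /kind_of.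
case: (o s) ot => /= ot ->; rewrite ?ot /=.
  by rewrite st; case: ifP => // /cont_rcusp_lower/(_ st).
case: ifP => [/cont_rcusp_upper/(_ st) //|_].
by case: ifP => // /rcusp_lower_upper/(_ st).
Qed.

Lemma kind_lcusp (s t : Seg w) : lcusp s t -> if o s then kind_of t = KD else kind_of s = KU.
Proof.
move=> st; have := next_lcusp st; have ot := orient_lcusp st; rewrite /kind_of.
have [no_st no_ts] := lcusp_contF st.
case: (o s) ot => /= ot ->; rewrite ?ot /= ?no_st ?no_ts; last by rewrite st.
by case: ifP => // ts; case: (lcusp_lower_upper st ts).
Qed.

Section Colorings.
Variables (X : finType) (sigma : {perm X}) (u d : X -> X).

Definition kfun (k : kind) : X -> X :=
  match k with KId => id | KSig => sigma | KSigInv => (sigma^-1)%g | KU => u | KD => d end.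

Let coloring := coloringb o (fun x _ => sigma x) u d.

Lemma coloring_of_next (c : {ffun Seg w -> X}) :
  (forall s, c (next s) = kfun (kind_of s) (c s)) -> coloring c.
Proof.
move=> c_next; apply/and4P; split; apply/forallP => s.
- apply/forallP => t; apply/implyP => /andP[st /negbTE s_over]; apply/eqP.
  have := kind_cont st; have := next_cont st; rewrite s_over.
  by case: (o s) => [<- kind_s|<- kind_t]; rewrite c_next ?kind_s ?kind_t.
- apply/forallP => s'; apply/forallP => t.
  apply/implyP => /and4P[st s_under /eqP ks' /eqP ps'].
  have := kind_cont st; have := next_cont st; rewrite s_under (over_dirE ks' ps').
  case: (o s) => [<- kind_s|<- kind_t]; rewrite c_next ?kind_s ?kind_t;
  by case: (o s') => /=; rewrite ?permKV.
- apply/forallP => t; apply/implyP => st; have := kind_lcusp st; have := next_lcusp st.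
  by case: (o s) => [<- kind_t|<- kind_s]; rewrite c_next ?kind_s ?kind_t.
- apply/forallP => t; apply/implyP => st; have := kind_rcusp st; have := next_rcusp st.
  by case: (o s) => [<- kind_s|<- kind_t]; rewrite c_next ?kind_s ?kind_t.
Qed.

Lemma coloring_cross (c : {ffun Seg w -> X}) (s t : Seg w) : coloring c ->
  cont s t -> is_under s -> c t = kfun (kcross (over_dir s)) (c s).
Proof.
case/and4P => _ /forallP cross_col _ _ st s_under; have [s' [ks' ps']] := under_over s_under.
move/forallP/(_ s')/forallP/(_ t): (cross_col s).
rewrite st s_under ks' ps' !eqxx (over_dirE ks' ps') /=.
by case: (o s') => /eqP -> /=; rewrite ?permK.
Qed.

Lemma coloring_next (c : {ffun Seg w -> X}) : coloring c ->
  forall s, c (next s) = kfun (kind_of s) (c s).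
Proof.
move=> c_col s; have /and4P[/forallP pass_col _ /forallP lcusp_col /forallP rcusp_col] := c_col.
have := next_step s; rewrite /step; set t := next s.
case os: (o s) => step_s; case/or3P: step_s.
- move=> st; have := kind_cont st; rewrite os => ->; case s_under: (is_under s).
    by rewrite (coloring_cross c_col st s_under).
  by apply/eqP; move/forallP/(_ t): (pass_col s); rewrite st s_under.
- move=> st; have := kind_rcusp st; rewrite os => ->.
  by apply/eqP; move/forallP/(_ t): (rcusp_col s); rewrite st os.
- move=> ts; have ot : o t = ~~ o s by rewrite (orient_rcusp ts) negbK.
  have := kind_rcusp ts; rewrite ot os => /= ->.
  by apply/eqP; move/forallP/(_ s): (rcusp_col t); rewrite ts ot os.
- move=> ts; have := kind_cont ts; rewrite -(orient_cont ts) os => ->; case t_under: (is_under t).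
    by rewrite (coloring_cross c_col ts t_under); case: (over_dir t) => /=; rewrite ?permK ?permKV.
  by apply/eqP; move/forallP/(_ s): (pass_col t); rewrite ts t_under eq_sym.
- move=> st; have := kind_lcusp st; rewrite os => ->.
  by apply/eqP; move/forallP/(_ t): (lcusp_col s); rewrite st os.
- move=> ts; have ot : o t = ~~ o s by rewrite (orient_lcusp ts) negbK.
  have := kind_lcusp ts; rewrite ot os => /= ->.
  by apply/eqP; move/forallP/(_ s): (lcusp_col t); rewrite ts ot os.
Qed.

Lemma coloringE (c : {ffun Seg w -> X}) :
  coloring c = [forall s, c (next s) == kfun (kind_of s) (c s)].
Proof.
apply/idP/forallP => [c_col s|c_next]; first exact/eqP/coloring_next.
by apply: coloring_of_next => s; apply/eqP.
Qed.
End Colorings.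

(** * Counting the steps of each kind *)

Lemma card_next_pred (P : pred (Seg w)) : #|[pred s | P (next s)]| = #|P|.
Proof.
rewrite -(card_image next_inj); apply: eq_card => t; apply/imageP/idP => [[s Ps ->] //|Pt].
by exists (finv next t); rewrite ?inE f_finv //; exact: next_inj.
Qed.

Lemma under_next_cont (x : Seg w) : is_under (next x) -> ~~ o (next x) -> cont (next x) x && ~~ o x.
Proof.
move=> r_under /negbTE or; have [t rt] := under_cont r_under.
have tx : t = x by apply: next_inj; have := next_cont rt; rewrite or.
by move: rt (orient_cont rt); rewrite tx => -> ->; rewrite or.
Qed.

Definition ncrossings (positive : bool) : nat :=
  #|[pred s | is_under s && ((o s == over_dir s) == positive)]|.

Lemma kind_crossE b (x : Seg w) : (kind_of x == kcross b) =
  if o x then is_under x && ((o x == over_dir x) == b)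
  else ~~ o (next x) && is_under (next x) && ((o (next x) == over_dir (next x)) == b).
Proof.
have not_cross k : k \in [:: KId; KU; KD] -> (k == kcross b) = false by case: b; case: k.
have kcross_eq c : (kcross c == kcross b) = (c == b) by case: c; case: (b).
have cusp_kind (P : bool) : ((if P then KU else KD) == kcross b) = false.
  by case: P; rewrite not_cross.
rewrite /kind_of; case ox: (o x).
  case x_under: (is_under x); last by case: ifP => _; rewrite ?cusp_kind ?not_cross.
  have [t xt] := under_cont x_under; have := next_cont xt; rewrite ox => ->.
  by rewrite xt /= kcross_eq.
case cx: (cont (next x) x).
  by rewrite -(orient_cont cx) ox /=; case: (is_under (next x)); rewrite ?kcross_eq ?not_cross.
rewrite cusp_kind; case r_under: (is_under (next x)); last by rewrite andbF.
by case onx: (o (next x)) => //=; have := under_next_cont r_under; rewrite onx cx => /(_ isT).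
Qed.

Lemma card_kind_cross b : #|[pred x | kind_of x == kcross b]| = ncrossings b.
Proof.
set C := [pred s | is_under s && ((o s == over_dir s) == b)].
have -> : ncrossings b = #|C| by [].
rewrite (eq_card (kind_crossE b)) card_predIf -(cardID [pred s | o s] C); congr (_ + _).
rewrite -(card_next_pred [predD C & [pred s | o s]]); apply: eq_card => x; rewrite !inE /=.
case: (o (next x)) (@under_next_cont x) => //=; case: (is_under (next x)) => //= /(_ isT isT).
by case/andP => _ ->; rewrite andbT.
Qed.

Lemma kind_uE (x : Seg w) :
  (kind_of x == KU) = if o x then [exists t, rcusp x t] else [exists t, lcusp x t].
Proof.
have not_u b : (kcross b == KU) = false by case: b.
rewrite /kind_of; case ox: (o x).
  have -> : [exists t, rcusp x t] = rcusp x (next x).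
    apply/existsP/idP => [[t xt]|]; last by exists (next x).
    by have := next_rcusp xt; rewrite ox => ->.
  case: ifP => [cx|_]; last by case: ifP.
  have -> : rcusp x (next x) = false by apply/negP => /(cont_rcusp_lower cx).
  by case: ifP; rewrite ?not_u.
have -> : [exists t, lcusp x t] = lcusp x (next x).
  apply/existsP/idP => [[t xt]|]; last by exists (next x).
  by have := next_lcusp xt; rewrite ox => ->.
case: ifP => [cx|_]; last by case: ifP.
have -> : lcusp x (next x) = false by apply/negP => /lcusp_contF[_]; rewrite cx.
by case: ifP; rewrite ?not_u.
Qed.

Lemma kind_dE (x : Seg w) : (kind_of x == KD) =
  if o (next x) then [exists t, lcusp (next x) t] else [exists t, rcusp (next x) t].
Proof.
have := next_step x; rewrite /step /kind_of; set r := next x.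
have not_d b : (kcross b == KD) = false by case: b.
case ox: (o x) => /= /or3P[h|h|h].
- rewrite h (orient_cont h) ox; have -> : [exists t, lcusp r t] = false.
    by apply/existsP => -[t /(cont_lcusp_lower h)].
  by case: ifP; rewrite ?not_d.
- have -> : cont x r = false by apply/negP => /cont_rcusp_lower/(_ h).
  rewrite h (orient_rcusp h) ox /=.
  by apply/esym/existsP => -[t /rcusp_lower_upper/(_ h)].
- have -> : cont x r = false by apply/negP => /cont_rcusp_upper/(_ h).
  have -> : rcusp x r = false by apply/negP => /rcusp_lower_upper/(_ h).
  have -> : o r = false by move: (orient_rcusp h); rewrite ox; case: (o r).
  by apply/esym/existsP; exists x.
- rewrite h -(orient_cont h) ox; have -> : [exists t, rcusp r t] = false.
    by apply/existsP => -[t /(cont_rcusp_lower h)].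
  by case: ifP; rewrite ?not_d.
- rewrite (lcusp_contF h).2 h (orient_lcusp h) ox /=.
  by apply/esym/existsP => -[t /lcusp_lower_upper/(_ h)].
- rewrite (lcusp_contF h).1; have -> : lcusp x r = false by apply/negP => /lcusp_lower_upper/(_ h).
  have -> : o r = true by move: (orient_lcusp h); rewrite ox; case: (o r).
  by apply/esym/existsP; exists x.
Qed.

Lemma card_kind_u : #|[pred x | kind_of x == KU]| = up_cusps o.
Proof. by rewrite (eq_card kind_uE) card_predIf addnC. Qed.

Lemma card_kind_d : #|[pred x | kind_of x == KD]| = down_cusps o.
Proof.
rewrite (eq_card kind_dE) (card_next_pred [pred s | if o s then [exists t, lcusp s t]
                                                    else [exists t, rcusp s t]]).
exact: card_predIf.
Qed.

Section PermutationColorings.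
Variables (X : finType) (sigma U : {perm X}) (u d : X -> X).
Hypotheses (uE : u =1 U) (dE : d =1 (sigma^-1 * U^-1)%g) (sigmaU : commute sigma U).

Definition act (p : nat * nat) : {perm X} := (sigma ^+ p.1 * U ^+ p.2)%g.

Lemma actD p q : act (p + q)%R = (act q * act p)%g.
Proof.
rewrite /act /= !expgD [in RHS]mulgA -[(_ * U ^+ q.2 * _)%g]mulgA.
rewrite (commuteX2 _ _ (commute_sym sigmaU)).
by rewrite !mulgA -!expgD -!mulgA -!expgD [(p.1 + _)%N]addnC [(p.2 + _)%N]addnC.
Qed.

(* Inverses are positive powers: [g^-1 = g^(#[g].-1)]. *)
Definition kind_exp (k : kind) : nat * nat :=
  match k with
  | KId => (0, 0) | KSig => (1, 0) | KSigInv => (#[sigma]%g.-1, 0)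
  | KU => (0, 1) | KD => (#[sigma]%g.-1, #[U]%g.-1)
  end.

Lemma kfun_act k x : kfun sigma u d k x = act (kind_exp k) x.
Proof.
by case: k; rewrite /act /= ?expg0 ?expg1 ?mulg1 ?mul1g ?perm1 ?uE ?dE -?invg_expg.
Qed.

Lemma sum_kind_exp : (\sum_s kind_exp (kind_of s))%R =
  (ncrossings true + #[sigma]%g.-1 * (ncrossings false + down_cusps o),
   up_cusps o + #[U]%g.-1 * down_cusps o).
Proof.
have card_kind k : \sum_s (kind_of s == k : nat) = #|[pred s | kind_of s == k]|.
  by rewrite -sum1_card [RHS]big_mkcond; apply: eq_bigr => s _; rewrite inE; case: (_ == _).
rewrite -!card_kind_cross -card_kind_u -card_kind_d -!card_kind.
rewrite [LHS]surjective_pairing !raddf_sum /=; congr pair.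
  rewrite -[X in _ * X]big_split big_distrr -big_split /=.
  by apply: eq_bigr => s _; case: (kind_of s); rewrite /= ?muln0 ?muln1.
rewrite big_distrr -big_split /=.
by apply: eq_bigr => s _; case: (kind_of s); rewrite /= ?muln0 ?muln1.
Qed.

Lemma card_colorings_perm : connected w ->
  ColD o (fun x _ => sigma x) u d =
  #|[pred x | act (ncrossings true + #[sigma]%g.-1 * (ncrossings false + down_cusps o),
                   up_cusps o + #[U]%g.-1 * down_cusps o) x == x]|.
Proof.
move=> w_conn; have [s0 _] := seg_inhabited.
have act0 x : act 0%R x = x by rewrite /act /= expg0 mulg1 perm1.
have actDx p q x : act (p + q)%R x = act p (act q x) by rewrite actD permM.
transitivity #|[pred c : {ffun Seg w -> X} |
                [forall s, c (next s) == act (kind_exp (kind_of s)) (c s)]]|.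
  by apply: eq_card => c; rewrite !inE coloringE; apply: eq_forallb => s; rewrite kfun_act.
rewrite -sum_kind_exp.
exact: (card_cycle_labellings (F := fun p x => act p x) act0 actDx _ next_inj
          (fconnect_next w_conn s0)).
Qed.
End PermutationColorings.
End Front.

(** * Permutation GL-racks and classical invariants *)

Lemma perm_GLrack_decomp (X : finType) (sigma : {perm X}) (u d : X -> X) :
  is_perm_GLrack sigma u d ->
  exists U : {perm X}, [/\ u =1 U, d =1 (sigma^-1 * U^-1)%g & commute sigma U].
Proof.
case=> -[_ dKu_op u_op _] ud.
have u_sigma x : u (sigma x) = sigma (u x) := (u_op x x).1.
have du x : d (u x) = (sigma^-1)%g x by rewrite -{1}(permKV sigma x) (dKu_op _).2.
have u_inj : injective u.
  by move=> x y /(congr1 d); rewrite !du; apply: perm_inj.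
exists (perm u_inj); split => [x|x|]; first by rewrite permE.
  by apply: (@perm_inj _ (perm u_inj)); rewrite permM permKV permE ud.
by apply/permP => x; rewrite !permM !permE u_sigma.
Qed.

Lemma writheE w (o : {ffun Seg w -> bool}) :
  writhe o = ((ncrossings o true)%:Z - (ncrossings o false)%:Z)%R.
Proof.
rewrite /writhe (bigID (fun s => o s == over_dir o s)) /=.
rewrite (eq_bigr (fun _ => 1%R)); last by move=> s /andP[_ ->].
rewrite [X in (_ + X)%R](eq_bigr (fun _ => (-1)%R)); last by move=> s /andP[_ /negbTE ->].
rewrite !sumr_const mulNrn !natz; congr (Posz _ - Posz _)%R; apply: eq_card => s.
  by rewrite !inE eqb_id.
by rewrite !inE eqbF_neg.
Qed.

Lemma tb_sub_rot w (o : {ffun Seg w -> bool}) :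
  (tbD o - rotD o)%R = ((writhe o - (down_cusps o)%:Z)%:~R : rat)%R.
Proof. by rewrite /tbD /rotD !intrD !intrN natrD /=; field. Qed.

Lemma classical_invariants w1 w2 (o1 : {ffun Seg w1 -> bool}) (o2 : {ffun Seg w2 -> bool}) :
  tbD o1 = tbD o2 -> rotD o1 = rotD o2 ->
  ncrossings o1 true + (ncrossings o2 false + down_cusps o2) =
    ncrossings o2 true + (ncrossings o1 false + down_cusps o1) /\
  up_cusps o1 + down_cusps o2 = up_cusps o2 + down_cusps o1.
Proof.
move=> tb_eq rot_eq.
have wd_eq : (writhe o1 - (down_cusps o1)%:Z)%R = (writhe o2 - (down_cusps o2)%:Z)%R.
  by apply: (@intr_inj rat); rewrite -!tb_sub_rot tb_eq rot_eq.
have du_eq : ((down_cusps o1)%:Z - (up_cusps o1)%:Z)%R = ((down_cusps o2)%:Z - (up_cusps o2)%:Z)%R.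
  apply: (@intr_inj rat); move: rot_eq; rewrite /rotD => /(congr1 (fun x => x * 2)%R).
  by rewrite !mulfVK.
rewrite !writheE in wd_eq; lia.
Qed.

Theorem theorem4p2 (K1 K2 : LegKnot) :
  same_knot_type K1 K2 -> tb_of K1 = tb_of K2 -> rot_of K1 = rot_of K2 ->
  forall (X : finType) (sigma : {perm X}) (u d : X -> X),
    is_perm_GLrack sigma u d ->
    Col (fun x _ => sigma x) u d K1 = Col (fun x _ => sigma x) u d K2.
Proof.
move=> _ tb_eq rot_eq X sigma u d /perm_GLrack_decomp [U [uE dE sigmaU]].
have [cross_eq cusp_eq] := classical_invariants tb_eq rot_eq.
rewrite /Col !(card_colorings_perm (lk_valid _) (lk_orient _) uE dE sigmaU (lk_conn _)).
by rewrite /act /= (expg_pred_order_eq sigma cross_eq) (expg_pred_order_eq U cusp_eq).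
Qed.
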